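(* Let $G=(V,E)$ be an $n$-vertex graph with nonnegative interactions $J$, let $\mu$ be the associated zero-field Ising measure, and let $F\subset V$ be a subset of size $\lfloor \sqrt n/\log n\rfloor$ satisfying $\sum_{u,v\in F,u\ne v}\mathrm{Cov}_\mu(\sigma(u),\sigma(v))\le 2/\log n$. Let $(Z_t^{(+)})$ be the chain $(Z_t)$ on $\{-1,1\}^F$ started from the all-plus configuration, and $\mathcal S_t=\sum_{v\in F}Z_t^{(+)}(v)$. Then for all $t\ge0$, $$\mathbb E_+(\mathcal S_t)\ge|F|\Big(1-\frac1{|F|}\Big)^t.$$
   Context: The Ising measure is $\mu(\sigma)=Z^{-1}\exp(\sum_{uv\in E}J_{uv}\sigma(u)\sigma(v))$ on $\{\pm1\}^V$, $J_{uv}\ge0$. The chain $(Z_t)$ on $\{-1,1\}^F$: at each step a vertex $v\in F$ is chosen uniformly at random and $Z(v)$ is resampled from the conditional law of $\sigma(v)$ under $\mu$ given the spins on $F\setminus\{v\}$ (spins outside $F$ are integrated out). Its stationary law $\nu_F$ is the marginal of $\mu$ on $F$. *)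

From HB Require Import structures.
From mathcomp Require Import all_boot all_order all_algebra.
From mathcomp Require Import reals.
From mathcomp Require Import sequences exp.
Set Implicit Arguments. Unset Strict Implicit. Unset Printing Implicit Defensive.
Import Order.TTheory GRing.Theory Num.Theory.
Local Open Scope ring_scope.

Section Ising.
Variables (R : realType) (V : finType).

Definition spin (b : bool) : R := if b then 1 else -1.

(* Hamiltonian-weight: sum over unordered edges uv of J_uv s(u) s(v),
   written as half of the sum over ordered adjacent pairs (e symmetric). *)
Definition ising_energy (e : rel V) (J : V -> V -> R) (s : {ffun V -> bool}) : R :=
  (\sum_(u : V) \sum_(v : V | e u v) J u v * spin (s u) * spin (s v)) / 2.

Definition ising_weight e J (s : {ffun V -> bool}) : R := expR (ising_energy e J s).

Definition ising_Z e J : R := \sum_(s : {ffun V -> bool}) ising_weight e J s.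

Definition ising_mu e J (s : {ffun V -> bool}) : R := ising_weight e J s / ising_Z e J.

Definition ising_E e J (f : {ffun V -> bool} -> R) : R :=
  \sum_(s : {ffun V -> bool}) ising_mu e J s * f s.

Definition ising_cov e J (u v : V) : R :=
  ising_E e J (fun s => spin (s u) * spin (s v))
  - ising_E e J (fun s => spin (s u)) * ising_E e J (fun s => spin (s v)).

Variable F : {set V}.

Definition FV := {v : V | v \in F}.
Definition confF := {ffun FV -> bool}.

Definition restrictF (s : {ffun V -> bool}) : confF := [ffun x : FV => s (val x)].

Definition nuF e J (eta : confF) : R :=
  \sum_(s : {ffun V -> bool} | restrictF s == eta) ising_mu e J s.

Definition updF (eta : confF) (v : FV) (b : bool) : confF :=
  [ffun w => if w == v then b else eta w].

(* transition kernel of the chain (Z_t): choose v in F uniformly, resample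
   Z(v) from the conditional law of sigma(v) given the spins on F \ {v}. *)
Definition transF e J (eta eta' : confF) : R :=
  (#|F|%:R)^-1 *
  \sum_(v : FV)
     (if eta' == updF eta v (eta' v)
      then nuF e J eta' / (nuF e J (updF eta v true) + nuF e J (updF eta v false))
      else 0).

Definition plusF : confF := [ffun => true].

Fixpoint lawF e J (t : nat) (eta : confF) : R :=
  match t with
  | 0 => if eta == plusF then 1 else 0
  | t'.+1 => \sum_(xi : confF) lawF e J t' xi * transF e J xi eta
  end.

Definition magF (eta : confF) : R := \sum_(v : FV) spin (eta v).

Definition ES e J (t : nat) : R := \sum_(eta : confF) lawF e J t eta * magF eta.

End Ising.

From HB Require Import structures.
From mathcomp Require Import all_boot all_order all_algebra.
From mathcomp Require Import reals.
From mathcomp Require Import sequences exp.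
From mathcomp Require Import ring lra.
Import Order.TTheory GRing.Theory Num.Theory.
Local Open Scope ring_scope.
Set Implicit Arguments. Unset Strict Implicit. Unset Printing Implicit Defensive.

(* The heat-bath chain on F is monotone: the ferromagnetic Ising measure
   satisfies the FKG lattice condition, which passes to its marginal nu_F, so
   the conditional probability p_v(eta) of a plus spin at v given the rest of
   F is increasing in eta.  Hence the law of Z_t^(+) dominates nu_F on
   increasing functions at every time.  One step of the chain gives
   E S_(t+1) = (1 - 1/|F|) E S_t + E g(Z_t) / |F|, with g = sum_v (2 p_v - 1)
   increasing; stationarity and the spin-flip symmetry force nu_F(g) = 0, so
   E g(Z_t) >= 0. *)

Section LogSupermodularMarginals.
Variables (R : realFieldType) (V : finType).
Local Notation conf := {ffun V -> bool}.

Definition join_conf (s s' : conf) : conf := [ffun y => s y || s' y].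
Definition meet_conf (s s' : conf) : conf := [ffun y => s y && s' y].
Definition updV (x : conf) u b : conf := [ffun y => if y == u then b else x y].

Definition agree_off (D : {set V}) (x s : conf) :=
  [forall u, (u \notin D) ==> (s u == x u)].

Lemma agree_off0 (x s : conf) : agree_off set0 x s = (s == x).
Proof.
apply/forallP/eqP => [H | ->]; last by move=> y; rewrite eqxx implybT.
by apply/ffunP => y; apply/eqP; have := H y; rewrite in_set0.
Qed.

Lemma agree_offD1 (D : {set V}) (x s : conf) u b : u \in D ->
  agree_off D x s && (s u == b) = agree_off (D :\ u) (updV x u b) s.
Proof.
move=> uD; apply/andP/forallP.
- move=> [/forallP H /eqP Hb] y; apply/implyP.
  rewrite in_setD1 negb_and negbK; case/orP => [/eqP -> | hy].
    by rewrite ffunE eqxx Hb.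
  have hyu : y != u by apply: contraNneq hy => ->.
  by rewrite ffunE (negbTE hyu); exact: (implyP (H y) hy).
- move=> H; split.
    apply/forallP => y; apply/implyP => hy.
    have hyu : y != u by apply: contraNneq hy => ->.
    have := implyP (H y); rewrite in_setD1 negb_and hy orbT => /(_ isT).
    by rewrite ffunE (negbTE hyu).
  have := implyP (H u); rewrite in_setD1 eqxx /= => /(_ isT).
  by rewrite ffunE eqxx.
Qed.

(* Ahlswede-Daykin on a single bit, with a_i, b_i, c_i, d_i the values at i. *)
Lemma four_functions_bool (a1 a0 b1 b0 c1 c0 d1 d0 : R) :
  0 <= a1 -> 0 <= a0 -> 0 <= b1 -> 0 <= b0 -> 0 <= c1 -> 0 <= c0 -> 0 <= d1 -> 0 <= d0 ->
  a1 * b1 <= c1 * d1 -> a1 * b0 <= c1 * d0 -> a0 * b1 <= c1 * d0 -> a0 * b0 <= c0 * d0 ->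
  (a1 + a0) * (b1 + b0) <= (c1 + c0) * (d1 + d0).
Proof.
move=> ha1 ha0 hb1 hb0 hc1 hc0 hd1 hd0 h11 h10 h01 h00.
set s := c1 * d0; set x := a1 * b0; set y := a0 * b1.
have hs : 0 <= s by rewrite mulr_ge0.
have hx : 0 <= x by rewrite mulr_ge0.
have hy : 0 <= y by rewrite mulr_ge0.
have hxy : x * y <= s * (c0 * d1).
  have -> : x * y = (a1 * b1) * (a0 * b0) by rewrite /x /y; ring.
  have -> : s * (c0 * d1) = (c1 * d1) * (c0 * d0) by rewrite /s; ring.
  by apply: ler_pM; rewrite ?mulr_ge0.
have cross : x + y <= s + c0 * d1.
  have [s0|s_neq0] := eqVneq s 0.
    have : 0 <= c0 * d1 by rewrite mulr_ge0.
    have : x <= 0 by rewrite -s0.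
    have : y <= 0 by rewrite -s0.
    lra.
  have s_gt0 : 0 < s by rewrite lt_def s_neq0 hs.
  have sx_sy : 0 <= (s - x) * (s - y) by rewrite mulr_ge0 // subr_ge0.
  have : s * (x + y) <= s * (s + c0 * d1) by nra.
  by rewrite ler_pM2l.
have -> : (a1 + a0) * (b1 + b0) = a1 * b1 + x + y + a0 * b0 by rewrite /x /y; ring.
have -> : (c1 + c0) * (d1 + d0) = c1 * d1 + s + c0 * d1 + c0 * d0 by rewrite /s; ring.
lra.
Qed.

Variable w : conf -> R.
Hypothesis w_ge0 : forall s, 0 <= w s.
Hypothesis w_lsm : forall s s', w s * w s' <= w (join_conf s s') * w (meet_conf s s').

Definition marg (D : {set V}) (x : conf) := \sum_(s | agree_off D x s) w s.

Lemma marg_ge0 D x : 0 <= marg D x.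
Proof. exact: sumr_ge0. Qed.

Lemma margD1 (D : {set V}) x u : u \in D ->
  marg D x = marg (D :\ u) (updV x u true) + marg (D :\ u) (updV x u false).
Proof.
move=> uD; rewrite /marg (bigID (fun s : conf => s u)) /=.
by congr (_ + _); apply: eq_bigl => s; rewrite -agree_offD1 //; case: (s u).
Qed.

Lemma marg_lsm (D : {set V}) (xa xb xc xd : conf) :
  (forall y, y \notin D -> xc y = xa y || xb y /\ xd y = xa y && xb y) ->
  marg D xa * marg D xb <= marg D xc * marg D xd.
Proof.
move hn: #|D| => n; elim: n D hn xa xb xc xd => [|n IH] D hD xa xb xc xd hb.
  have D0 : D = set0 by apply: cards0_eq.
  have marg0 x : marg set0 x = w x by rewrite /marg (big_pred1 x) // => s; rewrite agree_off0.
  rewrite D0 !marg0.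
  have -> : xc = join_conf xa xb.
    by apply/ffunP => y; rewrite ffunE; case: (hb y) => //; rewrite D0 in_set0.
  have -> : xd = meet_conf xa xb.
    by apply/ffunP => y; rewrite ffunE; case: (hb y) => //; rewrite D0 in_set0.
  exact: w_lsm.
have [u uD] : {u | u \in D}.
  case: (pickP (mem D)) => [u hu|h]; first by exists u.
  by move: hD; rewrite (eq_card0 h).
have hD' : #|D :\ u| = n by move: hD; rewrite (cardsD1 u D) uD => -[].
have IHu i j : marg (D :\ u) (updV xa u i) * marg (D :\ u) (updV xb u j) <=
               marg (D :\ u) (updV xc u (i || j)) * marg (D :\ u) (updV xd u (i && j)).
  apply: IH => // y; rewrite in_setD1 negb_and negbK !ffunE.
  by case: eqP => //= _ hy; exact: hb.
by rewrite !(margD1 _ uD); apply: four_functions_bool; rewrite ?marg_ge0.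
Qed.

End LogSupermodularMarginals.

Section HeatBath.
Variables (R : realType) (V : finType) (e : rel V) (J : V -> V -> R) (F : {set V}).
Hypothesis J_ge0 : forall u v, 0 <= J u v.

Local Notation conf := {ffun V -> bool}.
Local Notation FVF := (FV F).
Local Notation cF := (confF F).
Local Notation mu := (ising_mu e J).
Local Notation nu := (@nuF R V F e J).
Local Notation mag := (@magF R V F).
Local Notation N := (#|F|%:R : R).

Lemma sumFV_const (c : R) : \sum_(v : FVF) c = c *+ #|F|.
Proof. by rewrite sumr_const card_sig. Qed.

Lemma spin_lsm a b a' b' :
  spin R a * spin R b + spin R a' * spin R b' <=
  spin R (a || a') * spin R (b || b') + spin R (a && a') * spin R (b && b').
Proof. by case: a; case: b; case: a'; case: b'; rewrite /spin /=; lra. Qed.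

Lemma ising_energy_lsm (s s' : conf) :
  ising_energy e J s + ising_energy e J s' <=
  ising_energy e J (join_conf s s') + ising_energy e J (meet_conf s s').
Proof.
rewrite /ising_energy -!mulrDl; apply: ler_wpM2r; first by rewrite invr_ge0 ler0n.
rewrite -!big_split /=; apply: ler_sum => u _; rewrite -!big_split /=.
apply: ler_sum => v _; rewrite !ffunE -!mulrA -!mulrDr; apply: ler_wpM2l => //.
exact: spin_lsm.
Qed.

Lemma ising_Z_gt0 : 0 < ising_Z e J.
Proof.
rewrite /ising_Z (bigD1 [ffun=> true]) //= ltr_pwDl ?expR_gt0 // sumr_ge0 // => s _.
exact/ltW/expR_gt0.
Qed.

Lemma ising_mu_gt0 s : 0 < mu s.
Proof. by rewrite /ising_mu divr_gt0 ?expR_gt0 ?ising_Z_gt0. Qed.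

Lemma ising_mu_lsm (s s' : conf) : mu s * mu s' <= mu (join_conf s s') * mu (meet_conf s s').
Proof.
rewrite /ising_mu /ising_weight.
have E a b c : a / c * (b / c) = (a * b) * (c^-1 * c^-1) :> R by ring.
rewrite !E; apply: ler_wpM2r; first by rewrite mulr_ge0 // invr_ge0 ltW // ising_Z_gt0.
by rewrite -!expRD ler_expR; exact: ising_energy_lsm.
Qed.

Lemma ising_mu_neg (s : conf) : mu [ffun z => ~~ s z] = mu s.
Proof.
rewrite /ising_mu /ising_weight; congr (expR _ / _).
rewrite /ising_energy; congr (_ / _).
apply: eq_bigr => u _; apply: eq_bigr => v _.
by rewrite !ffunE /spin; case: (s u); case: (s v) => /=; ring.
Qed.

Definition extF (eta : cF) : conf :=
  [ffun y => if (insub y : option FVF) is Some z then eta z else false].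

Lemma restrictF_extF eta : restrictF F (extF eta) = eta.
Proof. by apply/ffunP => z; rewrite !ffunE valK. Qed.

Lemma nuF_marg eta : nu eta = marg mu (~: F) (extF eta).
Proof.
rewrite /nuF /marg; apply: eq_bigl => s; apply/eqP/forallP.
- move=> <- y; apply/implyP; rewrite inE negbK => yF.
  by rewrite ffunE; case: insubP => [z _ <-|]; rewrite ?ffunE ?yF.
- move=> H; apply/ffunP => z; rewrite ffunE.
  have := implyP (H (val z)); rewrite inE negbK (valP z) => /(_ isT)/eqP ->.
  by rewrite ffunE valK.
Qed.

Lemma nuF_gt0 eta : 0 < nu eta.
Proof.
rewrite /nuF (bigD1 (extF eta)) /=; last by rewrite restrictF_extF.
by rewrite ltr_pwDl ?ising_mu_gt0 // sumr_ge0 // => s _; exact/ltW/ising_mu_gt0.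
Qed.

Lemma sum_nuF : \sum_(x : cF) nu x = 1.
Proof.
rewrite /nuF; under eq_bigr => x _ do rewrite big_mkcond.
rewrite exchange_big /=.
under eq_bigr => s _ do rewrite -big_mkcond (big_pred1 (restrictF F s)) //.
by rewrite /ising_mu -mulr_suml divff // gt_eqF ?ising_Z_gt0.
Qed.

Definition negF (x : cF) : cF := [ffun z => ~~ x z].

Lemma negFK : involutive negF.
Proof. by move=> x; apply/ffunP=> z; rewrite !ffunE negbK. Qed.

Lemma nuF_neg x : nu (negF x) = nu x.
Proof.
pose negV (s : conf) : conf := [ffun z => ~~ s z].
have negVK : involutive negV by move=> s; apply/ffunP=> z; rewrite !ffunE negbK.
rewrite /nuF (reindex_inj (inv_inj negVK)) /=; apply: eq_big => s.
  have -> : restrictF F (negV s) = negF (restrictF F s) by apply/ffunP => z; rewrite !ffunE.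
  by rewrite (inj_eq (inv_inj negFK)).
by move=> _; rewrite ising_mu_neg.
Qed.

Definition conf_le (x y : cF) := forall z, x z -> y z.

Lemma conf_le_plusF x : conf_le x (plusF F).
Proof. by move=> z _; rewrite ffunE. Qed.

Lemma conf_le_updF x y v b : conf_le x y -> conf_le (updF x v b) (updF y v b).
Proof. by move=> h z; rewrite !ffunE; case: (z == v) => //; exact: h. Qed.

Lemma conf_le_updF_bool (x : cF) v : conf_le (updF x v false) (updF x v true).
Proof. by move=> z; rewrite !ffunE; case: (z == v). Qed.

Lemma nuF_lsm_updF (x y : cF) v : conf_le x y ->
  nu (updF x v true) * nu (updF y v false) <= nu (updF y v true) * nu (updF x v false).
Proof.
move=> hle; rewrite !nuF_marg.
apply: (marg_lsm (fun s => ltW (ising_mu_gt0 s)) ising_mu_lsm) => u.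
rewrite inE negbK => uF; rewrite !ffunE; case: insubP => [z _ _|]; last by rewrite uF.
rewrite !ffunE; case: (z == v) => //=.
by have := hle z; case: (x z); case: (y z) => // ->.
Qed.

Definition pplus (x : cF) (v : FVF) :=
  nu (updF x v true) / (nu (updF x v true) + nu (updF x v false)).

Lemma nuF_pair_gt0 (x : cF) v : 0 < nu (updF x v true) + nu (updF x v false).
Proof. by rewrite addr_gt0 ?nuF_gt0. Qed.

Lemma pplus_ge0 x v : 0 <= pplus x v.
Proof. by rewrite /pplus divr_ge0 // ltW ?nuF_gt0 ?nuF_pair_gt0. Qed.

Lemma pplus_le1 x v : pplus x v <= 1.
Proof.
by rewrite /pplus ler_pdivrMr ?nuF_pair_gt0 // mul1r lerDl; exact/ltW/nuF_gt0.
Qed.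

Lemma pplus_mono x y v : conf_le x y -> pplus x v <= pplus y v.
Proof.
move=> hle; have h := nuF_lsm_updF v hle.
have a0 := nuF_gt0 (updF x v true); have b0 := nuF_gt0 (updF x v false).
have a1 := nuF_gt0 (updF y v true); have b1 := nuF_gt0 (updF y v false).
rewrite /pplus ler_pdivrMr ?nuF_pair_gt0 // mulrAC ler_pdivlMr ?nuF_pair_gt0 //.
nra.
Qed.

Definition glauber_site (f : cF -> R) (x : cF) (v : FVF) :=
  pplus x v * f (updF x v true) + (1 - pplus x v) * f (updF x v false).

Definition glauber (f : cF -> R) (x : cF) := N^-1 * \sum_(v : FVF) glauber_site f x v.

Lemma transF_glauber (f : cF -> R) x :
  \sum_(y : cF) transF e J x y * f y = glauber f x.
Proof.
rewrite /transF /glauber.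
under eq_bigr => y _ do rewrite -mulrA mulr_suml.
rewrite -mulr_sumr; congr (_ * _); rewrite exchange_big /=; apply: eq_bigr => v _.
set Z := _ + _.
have split_upd (y : cF) : (if y == updF x v (y v) then nu y / Z else 0) * f y =
   (if y == updF x v true then nu y / Z * f y else 0) +
   (if y == updF x v false then nu y / Z * f y else 0).
  have updF_v b : y = updF x v b -> y v = b by move=> ->; rewrite ffunE eqxx.
  case: (y v) updF_v => updF_v.
    have -> : (y == updF x v false) = false by apply/eqP => /updF_v.
    by rewrite addr0; case: ifP => _; rewrite ?mul0r.
  have -> : (y == updF x v true) = false by apply/eqP => /updF_v.
  by rewrite add0r; case: ifP => _; rewrite ?mul0r.
rewrite (eq_bigr _ (fun y _ => split_upd y)) big_split /= -!big_mkcond !big_pred1_eq.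
rewrite /glauber_site /pplus -/Z; congr (_ + _ * _).
by apply/eqP; rewrite eq_sym subr_eq -mulrDl addrC divff // gt_eqF ?nuF_pair_gt0.
Qed.

Lemma lawF_step (f : cF -> R) t :
  \sum_(y : cF) lawF e J t.+1 y * f y = \sum_(x : cF) lawF e J t x * glauber f x.
Proof.
rewrite /=; under eq_bigr => y _ do rewrite mulr_suml.
rewrite exchange_big; apply: eq_bigr => x _; rewrite -transF_glauber mulr_sumr.
by apply: eq_bigr => y _; rewrite mulrA.
Qed.

Lemma updF_updF (x : cF) v b b' : updF (updF x v b) v b' = updF x v b'.
Proof. by apply/ffunP => z; rewrite !ffunE; case: (z == v). Qed.

Lemma updF_id (x : cF) v : updF x v (x v) = x.
Proof. by apply/ffunP => z; rewrite !ffunE; case: eqP => // ->. Qed.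

Definition flipF (v : FVF) (x : cF) := updF x v (~~ x v).

Lemma flipFK v : involutive (flipF v).
Proof. by move=> x; rewrite /flipF updF_updF ffunE eqxx negbK updF_id. Qed.

Lemma flipF_pair (x : cF) v (g : cF -> R) :
  g x + g (flipF v x) = g (updF x v true) + g (updF x v false).
Proof. by rewrite /flipF; have := updF_id x v; case: (x v) => /= ->; rewrite // addrC. Qed.

(* Detailed balance at a single site: pairing x with its flip at v, both
   sides of each pair agree because glauber_site f is flip-invariant. *)
Lemma glauber_site_stationary (f : cF -> R) v :
  \sum_(x : cF) nu x * glauber_site f x v = \sum_(x : cF) nu x * f x.
Proof.
apply/eqP; rewrite -subr_eq0 -sumrB; apply/eqP.
set D := fun x => nu x * glauber_site f x v - nu x * f x.
rewrite -/(\sum_(x : cF) D x).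
have site_flip x : glauber_site f (flipF v x) v = glauber_site f x v.
  by rewrite /glauber_site /pplus /flipF !updF_updF.
have D_flip x : D x + D (flipF v x) = 0.
  rewrite /D site_flip.
  have -> : nu x * glauber_site f x v - nu x * f x +
            (nu (flipF v x) * glauber_site f x v - nu (flipF v x) * f (flipF v x))
     = (nu x + nu (flipF v x)) * glauber_site f x v
       - (nu x * f x + nu (flipF v x) * f (flipF v x)) by ring.
  rewrite (flipF_pair x v nu) (flipF_pair x v (fun z => nu z * f z)) /glauber_site /pplus.
  by field; rewrite gt_eqF ?nuF_pair_gt0.
have : \sum_(x : cF) D x = \sum_(x : cF) D (flipF v x).
  exact: (reindex_inj (inv_inj (flipFK v))).
have : \sum_(x : cF) D x + \sum_(x : cF) D (flipF v x) = 0.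
  by rewrite -big_split; apply: big1 => x _; exact: D_flip.
lra.
Qed.

Definition increasing (f : cF -> R) := forall x y, conf_le x y -> f x <= f y.

Lemma glauber_increasing f : increasing f -> increasing (glauber f).
Proof.
move=> hf x y hle; rewrite /glauber; apply: ler_wpM2l; first by rewrite invr_ge0 ler0n.
apply: ler_sum => v _; rewrite /glauber_site.
have h1 := hf _ _ (@conf_le_updF x y v true hle).
have h2 := hf _ _ (@conf_le_updF x y v false hle).
have h3 := hf _ _ (@conf_le_updF_bool y v).
have hp := @pplus_mono x y v hle; have p0 := pplus_ge0 x v; have p1 := pplus_le1 y v.
set p := pplus x v in hp p0 *; set q := pplus y v in hp p1 *.
set a := f (updF x v true) in h1 *; set b := f (updF x v false) in h2 *.
set a' := f (updF y v true) in h1 h3 *; set b' := f (updF y v false) in h2 h3 *.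
have k1 : 0 <= p * (a' - a) by rewrite mulr_ge0 // subr_ge0.
have k2 : 0 <= (1 - p) * (b' - b) by rewrite mulr_ge0 // subr_ge0 // (le_trans hp p1).
have k3 : 0 <= (q - p) * (a' - b') by rewrite mulr_ge0 // subr_ge0.
have -> : q * a' + (1 - q) * b' = p * a + (1 - p) * b +
    (p * (a' - a) + (1 - p) * (b' - b) + (q - p) * (a' - b')) by ring.
lra.
Qed.

Lemma magF_neg x : mag (negF x) = - mag x.
Proof.
rewrite /magF -sumrN; apply: eq_bigr => z _.
by rewrite ffunE /spin; case: (x z); rewrite /= ?opprK.
Qed.

Lemma nuF_magF_mean0 : \sum_(x : cF) nu x * mag x = 0.
Proof.
have : \sum_(x : cF) nu x * mag x = \sum_(x : cF) nu (negF x) * mag (negF x).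
  exact: (reindex_inj (inv_inj negFK)).
have : \sum_(x : cF) nu (negF x) * mag (negF x) = - \sum_(x : cF) nu x * mag x.
  by rewrite -sumrN; apply: eq_bigr => x _; rewrite nuF_neg magF_neg mulrN.
lra.
Qed.

Lemma magF_updF (x : cF) (v : FVF) b : mag (updF x v b) = mag x - spin R (x v) + spin R b.
Proof.
rewrite /magF (bigD1 v) // [X in _ = X - _ + _](bigD1 v) //= ffunE eqxx.
rewrite (eq_bigr (fun z => spin R (x z))); last by move=> z /negbTE hz; rewrite ffunE hz.
ring.
Qed.

Definition drift (x : cF) := \sum_(v : FVF) (2 * pplus x v - 1).

Lemma drift_increasing : increasing drift.
Proof. by move=> x y h; apply: ler_sum => v _; have := @pplus_mono x y v h; lra. Qed.

Lemma glauber_magF x : glauber mag x = N^-1 * ((N - 1) * mag x + drift x).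
Proof.
rewrite /glauber; congr (_ * _).
rewrite (eq_bigr (fun v => mag x + (2 * pplus x v - 1) - spin R (x v))); last first.
  by move=> v _; rewrite /glauber_site !magF_updF /spin /=; ring.
rewrite big_split /= big_split /= sumrN sumFV_const -/(drift x).
have -> : \sum_(v : FVF) spin R (x v) = mag x by [].
by rewrite -mulr_natr; ring.
Qed.

Lemma sum_glauber_magF (lam : cF -> R) :
  \sum_(x : cF) lam x * glauber mag x =
  N^-1 * ((N - 1) * \sum_(x : cF) lam x * mag x + \sum_(x : cF) lam x * drift x).
Proof.
rewrite mulr_sumr -big_split /= mulr_sumr; apply: eq_bigr => x _.
by rewrite glauber_magF; ring.
Qed.

Lemma ES_step t : ES F e J t.+1 =
  N^-1 * ((N - 1) * ES F e J t + \sum_(x : cF) lawF e J t x * drift x).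
Proof. by rewrite /ES lawF_step sum_glauber_magF. Qed.

Hypothesis F_gt0 : (0 < #|F|)%N.

Lemma glauber_stationary (f : cF -> R) :
  \sum_(x : cF) nu x * glauber f x = \sum_(x : cF) nu x * f x.
Proof.
rewrite /glauber.
under eq_bigr => x _ do rewrite mulrCA mulr_sumr.
rewrite -mulr_sumr exchange_big /=.
under eq_bigr => v _ do rewrite glauber_site_stationary.
by rewrite sumFV_const -(mulr_natl (\sum_x _)) mulKf // pnatr_eq0 -lt0n.
Qed.

Lemma lawF_dominates_nuF t f : increasing f ->
  \sum_(x : cF) nu x * f x <= \sum_(x : cF) lawF e J t x * f x.
Proof.
elim: t f => [|t IH] f hf.
  rewrite /= [X in _ <= X](bigD1 (plusF F)) //= eqxx mul1r [X in _ <= _ + X]big1 ?addr0; last first.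
    by move=> x /negbTE ->; rewrite mul0r.
  apply: (@le_trans _ _ (\sum_(x : cF) nu x * f (plusF F))).
    apply: ler_sum => x _; apply: ler_wpM2l; first exact/ltW/nuF_gt0.
    exact/hf/conf_le_plusF.
  by rewrite -mulr_suml sum_nuF mul1r.
by rewrite lawF_step -glauber_stationary; exact: IH (glauber_increasing hf).
Qed.

Lemma nuF_drift_mean0 : \sum_(x : cF) nu x * drift x = 0.
Proof.
have := glauber_stationary mag; rewrite sum_glauber_magF nuF_magF_mean0 mulr0 add0r.
by move/eqP; rewrite mulf_eq0 invr_eq0 pnatr_eq0 gtn_eqF //= => /eqP.
Qed.

Lemma lawF_drift_ge0 t : 0 <= \sum_(x : cF) lawF e J t x * drift x.
Proof. by have := @lawF_dominates_nuF t _ drift_increasing; rewrite nuF_drift_mean0. Qed.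

Lemma ES_ge_geometric t : N * (1 - N^-1) ^+ t <= ES F e J t.
Proof.
have N_gt0 : 0 < N by rewrite ltr0n.
have q_ge0 : 0 <= 1 - N^-1 by rewrite subr_ge0 invf_le1 // ler1n.
elim: t => [|t IH].
  rewrite expr0 mulr1 /ES (bigD1 (plusF F)) //= eqxx mul1r big1 ?addr0; last first.
    by move=> x /negbTE ->; rewrite mul0r.
  by rewrite /magF (eq_bigr (fun _ => 1)) ?sumFV_const // => z _; rewrite ffunE.
have := lawF_drift_ge0 t; rewrite ES_step.
set G := \sum_(x : cF) _ => G_ge0.
have -> : N^-1 * ((N - 1) * ES F e J t + G) = (1 - N^-1) * ES F e J t + N^-1 * G.
  by field; rewrite gt_eqF.
have : (1 - N^-1) * (N * (1 - N^-1) ^+ t) <= (1 - N^-1) * ES F e J t.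
  exact: ler_wpM2l.
have : 0 <= N^-1 * G by rewrite mulr_ge0 // invr_ge0 ltW.
rewrite exprS mulrCA; lra.
Qed.

End HeatBath.

Theorem lemma2p5 (R : realType) (V : finType) (e : rel V) (J : V -> V -> R)
  (F : {set V}) :
  symmetric e -> irreflexive e ->
  (forall u v, J u v = J v u) -> (forall u v, 0 <= J u v) ->
  (#|F| : int) = Num.floor (Num.sqrt (#|V|%:R : R) / ln (#|V|%:R : R)) ->
  \sum_(u in F) \sum_(v in F | u != v) ising_cov e J u v <= 2 / ln (#|V|%:R : R) ->
  forall t : nat,
    (#|F|%:R : R) * (1 - (#|F|%:R : R)^-1) ^+ t <= ES F e J t.
Proof.
move=> _ _ _ J_ge0 _ _ t.
have [F0|F_gt0] := posnP #|F|; last exact: ES_ge_geometric.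
have notinF x : (x \in F) = false by rewrite (cards0_eq F0) inE.
rewrite F0 mul0r /ES big1 // => eta _.
by rewrite /magF big1 ?mulr0 // => z _; have := valP z; rewrite notinF.
Qed.
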